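(* Let $G=(V,E)$ be a finite, connected, undirected graph with $n\ge2$ vertices and let $0<r<1$. Then the absorption time $\tau$ of the Moran process on $G$ with fitness $r$ (started from a single mutant at any vertex) satisfies $\mathbb{E}[\tau]\le\frac{1}{1-r}n^3$.
   Context: The Moran process on $G$ with mutant fitness $r>0$ is the Markov chain $(X_i)_{i\ge0}$ whose state $X_i\subseteq V$ is the set of vertices occupied by mutants; every other vertex is occupied by a non-mutant of fitness $1$. Write $W(S)=r|S|+|V\setminus S|$ for the total fitness. Given $X_i=S$, one step is: choose a vertex $x$ with probability $r/W(S)$ if $x\in S$ and $1/W(S)$ if $x\notin S$; then choose a neighbour $y$ of $x$ uniformly at random; set $X_{i+1}=S\cup\{y\}$ if $x\in S$ and $X_{i+1}=S\setminus\{y\}$ if $x\notin S$. The process starts from $X_0=\{x\}$ for a single vertex $x$. The absorption time is $\tau=\min\{i: X_i=\emptyset\text{ or }X_i=V\}$. *)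

From HB Require Import structures.
From mathcomp Require Import all_boot all_order all_algebra.
Set Implicit Arguments. Unset Strict Implicit. Unset Printing Implicit Defensive.
Import Order.TTheory GRing.Theory Num.Theory.
Local Open Scope ring_scope.

Section Moran.
Variables (R : realFieldType) (T : finType) (e : rel T) (r : R).

Definition deg (x : T) : nat := #|[set y | e x y]|.

Definition fitness (S : {set T}) (x : T) : R := if x \in S then r else 1.

Definition Wfit (S : {set T}) : R := r * (#|S|)%:R + (#|~: S|)%:R.

Definition moran_step (S S' : {set T}) : R :=
  \sum_(x : T) \sum_(y : T | e x y)
     (fitness S x / Wfit S) * ((deg x)%:R)^-1 *
     (S' == (if x \in S then y |: S else S :\ y))%:R.

Fixpoint moran_dist (x0 : T) (i : nat) : {set T} -> R :=
  match i with
  | 0 => fun S => (S == [set x0])%:R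
  | i'.+1 => fun S' => \sum_(S : {set T}) moran_dist x0 i' S * moran_step S S'
  end.

(* P(tau > i) = P(X_i is neither empty nor V); empty set and V are absorbing *)
Definition prob_tau_gt (x0 : T) (i : nat) : R :=
  \sum_(S : {set T} | (S != set0) && (S != setT)) moran_dist x0 i S.

End Moran.

From HB Require Import structures.
From mathcomp Require Import all_boot all_order all_algebra.
From mathcomp Require Import ring lra.
Import Order.TTheory GRing.Theory Num.Theory.
Local Open Scope ring_scope.

(* Weight every vertex by the inverse of its degree and let
   phi(S) = \sum_(x in S) 1/deg x.  One step of the Moran process moves phi by
   +1/deg y when a mutant x reproduces onto a non-mutant neighbour y (prob.
   r/(W deg x)) and by -1/deg y in the symmetric situation (prob. 1/(W deg x)).
   Summing over the cut edges of S gives the exact drift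
       E[phi(S')] = phi(S) - (1 - r)/W(S) * H(S),
   where H(S) = cut S is the total weight 1/(deg x deg y) of the edges leaving S.
   Connectivity gives a cut edge whenever S is neither empty nor V, so
   H(S) >= 1/n^2, and W(S) <= n; hence phi drops in expectation by at least
   c = (1 - r)/n^3 while the process is not absorbed.  Writing Phi(i) for the
   expectation of phi(X_i), a telescoping argument gives
   c * \sum_(i < N) P(tau > i) <= Phi(0) - Phi(N) <= phi({x0}) <= 1.
   The file proves two general facts about sums in ordered fields, two graph facts
   (positive degrees, existence of cut edges), the drift identity and the
   drift bound, the evolution of Phi, and finally the theorem. *)

Lemma ler_sum_term {R : numDomainType} {I : finType} (F : I -> R) (i : I) :
  (forall j, 0 <= F j) -> F i <= \sum_j F j.
Proof.
move=> F_ge0; rewrite (bigD1 i) //= lerDl.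
by apply: sumr_ge0 => j _; exact: F_ge0.
Qed.

Lemma potential_telescope {R : realDomainType} (Phi p : nat -> R) (c : R) :
  (forall i, 0 <= Phi i) -> (forall i, Phi i.+1 <= Phi i - c * p i) ->
  forall N, c * \sum_(i < N) p i <= Phi 0%N.
Proof.
move=> Phi_ge0 Phi_dec N.
suff bound : c * \sum_(i < N) p i + Phi N <= Phi 0%N.
  by have := Phi_ge0 N; lra.
elim: N => [|N IH]; first by rewrite big_ord0 mulr0 add0r.
rewrite big_ord_recr /=; apply: le_trans IH.
by have := Phi_dec N; lra.
Qed.

Section Graph.
Variables (T : finType) (e : rel T).
Hypotheses (e_sym : symmetric e) (e_conn : forall x y : T, connect e x y)
  (hn : (2 <= #|T|)%N).

(* In a connected graph with at least two vertices every vertex has a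
   neighbour: the first step of a path to any other vertex. *)
Lemma deg_gt0 (x : T) : (0 < deg e x)%N.
Proof.
have [y neq_yx] : exists y, y != x.
  have /card_gt1P [a [b [_ _ neq_ab]]] : (1 < #|T|)%N by [].
  by case: (eqVneq a x) => [eq_ax|]; [exists b; rewrite -eq_ax eq_sym | exists a].
have /connectP [[|z p] /= path_xp last_xp] := e_conn x y.
  by rewrite last_xp eqxx in neq_yx.
by apply/card_gt0P; exists z; rewrite inE; case/andP: path_xp.
Qed.

(* A proper nonempty vertex set has an edge leaving it: otherwise it would be
   closed under the (symmetric) edge relation, contradicting connectivity. *)
Lemma cut_edge (S : {set T}) : S != set0 -> S != setT ->
  exists x y, [/\ x \in S, y \notin S & e x y].
Proof.
move=> /set0Pn [x xS] /negP S_not_full.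
have [/existsP [x' /existsP [y /and3P [x'S yS ex'y]]]|] :=
  boolP [exists x, exists y, [&& x \in S, y \notin S & e x y]].
  by exists x', y.
rewrite negb_exists => /forallP no_cut.
have S_closed : closed e S.
  have out_closed u v : e u v -> u \in S -> v \in S.
    move=> euv uS; apply: contraT => vS.
    by move: (no_cut u); rewrite negb_exists => /forallP/(_ v); rewrite uS vS euv.
  move=> u v euv; apply/idP/idP; first exact: out_closed.
  by apply: out_closed; rewrite e_sym.
case: S_not_full; apply/eqP/setP => y; rewrite inE.
by rewrite -(closed_connect S_closed (e_conn x y)).
Qed.

End Graph.

Section Drift.
Variables (R : realFieldType) (T : finType) (e : rel T).
Hypotheses (e_sym : symmetric e) (e_conn : forall x y : T, connect e x y)
  (hn : (2 <= #|T|)%N).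
Variable r : R.
Hypotheses (hr0 : 0 < r) (hr1 : r < 1).

Local Notation n := (#|T|%:R : R).

Definition degR (x : T) : R := (deg e x)%:R.

Definition phi (S : {set T}) : R := \sum_(x in S) (degR x)^-1.

Definition cut_weight (S : {set T}) (x y : T) : R :=
  (e x y && (x \in S) && (y \notin S))%:R * ((degR x)^-1 * (degR y)^-1).

Definition cut (S : {set T}) : R := \sum_x \sum_y cut_weight S x y.

Definition expect_step (S : {set T}) (g : {set T} -> R) : R :=
  \sum_S' moran_step e r S S' * g S'.

Lemma n_gt0 : 0 < n.
Proof. by rewrite ltr0n (leq_trans _ hn). Qed.

Lemma degR_gt0 (x : T) : 0 < degR x.
Proof. by rewrite ltr0n (@deg_gt0 _ _ e_conn hn). Qed.

Lemma invn_le_invdeg (x : T) : n^-1 <= (degR x)^-1.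
Proof. by rewrite lef_pV2 ?posrE ?degR_gt0 ?n_gt0 // ler_nat max_card. Qed.

Lemma Wfit_gt0 (S : {set T}) : 0 < Wfit r S.
Proof.
rewrite /Wfit; have : (0 < #|S| + #|~: S|)%N by rewrite cardsC (leq_trans _ hn).
rewrite addn_gt0 => /orP [S_gt0|SC_gt0].
  by apply: ltr_pwDl; rewrite ?mulr_gt0 ?ltr0n ?ler0n.
by apply: ltr_wpDl; rewrite ?mulr_ge0 ?ler0n ?ltW ?ltr0n.
Qed.

Lemma Wfit_le_n (S : {set T}) : Wfit r S <= n.
Proof.
rewrite /Wfit -(cardsC S) natrD lerD2r -[X in _ <= X]mul1r.
by rewrite ler_wpM2r ?ler0n // ltW.
Qed.

Lemma sum_fitness (S : {set T}) : \sum_x fitness r S x = Wfit r S.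
Proof.
rewrite (bigID (mem S)) /= (eq_bigr (fun _ => r)); last first.
  by move=> x xS; rewrite /fitness xS.
rewrite [X in _ + X](eq_bigr (fun _ => 1)); last first.
  by move=> x /negbTE xS; rewrite /fitness xS.
rewrite !sumr_const /Wfit mulr_natr -[1 *+ _]mulr_natr mul1r.
by congr (_ + _%:R); apply: eq_card => z; rewrite !inE.
Qed.

(* The probability of choosing the reproducing vertex x and then its
   neighbour y. *)
Definition move_prob (S : {set T}) (x : T) : R :=
  fitness r S x / Wfit r S * (degR x)^-1.

Lemma expect_stepE (S : {set T}) (g : {set T} -> R) :
  expect_step S g = \sum_x \sum_y
    (if e x y then move_prob S x * g (if x \in S then y |: S else S :\ y)
     else 0).
Proof.
rewrite /expect_step /moran_step.
under eq_bigr do rewrite mulr_suml; rewrite exchange_big; apply: eq_bigr => x _.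
under eq_bigr do rewrite mulr_suml; rewrite exchange_big /= big_mkcond.
apply: eq_bigr => y _; case: (e x y) => //.
rewrite (bigD1 (if x \in S then y |: S else S :\ y)) //= eqxx mulr1.
by rewrite big1 ?addr0 // => S' /negbTE ->; rewrite mulr0 mul0r.
Qed.

Lemma sum_move_prob (S : {set T}) (c : R) :
  \sum_x \sum_y (if e x y then move_prob S x * c else 0) = c.
Proof.
transitivity (\sum_x fitness r S x / Wfit r S * c); last first.
  by rewrite -!mulr_suml sum_fitness divff ?mul1r // gt_eqF ?Wfit_gt0.
apply: eq_bigr => x _; rewrite -big_mkcond sumr_const -mulr_natr /=.
rewrite -cardsE -/(deg e x) -/(degR x) /move_prob.
have := degR_gt0 x; move: (degR x) => d d_gt0.
by rewrite mulrAC mulfVK // gt_eqF.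
Qed.

(* Change of phi along one choice (x, y): only cut edges matter, a mutant
   reproducing across the cut adds 1/deg y, a non-mutant removes 1/deg x
   (the edge y -> x leaves S). *)
Lemma move_phi (S : {set T}) (x y : T) :
  (if e x y then move_prob S x * phi (if x \in S then y |: S else S :\ y)
   else 0) =
  (if e x y then move_prob S x * phi S else 0)
  + (r * cut_weight S x y - cut_weight S y x) / Wfit r S.
Proof.
rewrite /cut_weight /move_prob (e_sym y x) /fitness.
case: (e x y) => /=; last by rewrite !mul0r mulr0 subr0 mul0r add0r.
case xS: (x \in S); case yS: (y \in S) => /=.
- have -> : y |: S = S by apply/setUidPr; rewrite sub1set.
  by rewrite !mul0r mulr0 subr0 mul0r addr0.
- by rewrite /phi big_setU1 ?yS //= mul1r mul0r subr0; ring.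
- by rewrite /phi (big_setD1 _ yS) /= mul0r mulr0 mul1r sub0r; ring.
- have -> : S :\ y = S by apply/setDidPl; rewrite disjoint_sym disjoints1 yS.
  by rewrite !mul0r mulr0 subr0 mul0r addr0.
Qed.

Lemma expect_step_phi (S : {set T}) :
  expect_step S phi = phi S + (r - 1) / Wfit r S * cut S.
Proof.
have sum_cut : \sum_x \sum_y ((r * cut_weight S x y - cut_weight S y x) / Wfit r S)
    = (r - 1) / Wfit r S * cut S.
  transitivity ((r * cut S - \sum_x \sum_y cut_weight S y x) / Wfit r S).
    rewrite /cut mulr_sumr -sumrB mulr_suml; apply: eq_bigr => x _.
    by rewrite mulr_sumr -sumrB mulr_suml.
  by rewrite [\sum_x \sum_y cut_weight S y x]exchange_big /cut /=; ring.
rewrite expect_stepE -sum_cut -[in RHS](sum_move_prob S (phi S)) -big_split /=.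
by apply: eq_bigr => x _; rewrite -big_split; apply: eq_bigr => y _; exact: move_phi.
Qed.

Lemma cut_weight_ge0 (S : {set T}) (x y : T) : 0 <= cut_weight S x y.
Proof. by rewrite mulr_ge0 ?ler0n // mulr_ge0 // invr_ge0 ltW // degR_gt0. Qed.

Lemma cut_ge0 (S : {set T}) : 0 <= cut S.
Proof. by do 2![apply: sumr_ge0 => ? _]; exact: cut_weight_ge0. Qed.

(* A proper nonempty set has a cut edge, of weight at least 1/n^2. *)
Lemma cut_lb (S : {set T}) : S != set0 -> S != setT -> n^-1 ^+ 2 <= cut S.
Proof.
move=> S_ne0 S_neT; have [x [y [xS yS exy]]] := @cut_edge _ _ e_sym e_conn S S_ne0 S_neT.
apply: le_trans _ (ler_sum_term (fun x => \sum_y cut_weight S x y) x _); last first.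
  by move=> z; apply: sumr_ge0 => *; exact: cut_weight_ge0.
apply: le_trans _ (ler_sum_term (cut_weight S x) y (cut_weight_ge0 S x)).
rewrite /cut_weight exy xS yS /= mul1r expr2.
by apply: ler_pM; rewrite ?invr_ge0 ?ler0n ?invn_le_invdeg.
Qed.

(* The guaranteed decrease of phi per step before absorption. *)
Definition drift_rate : R := (1 - r) / n ^+ 3.

Lemma expect_step_phi_le (S : {set T}) :
  expect_step S phi <= phi S - drift_rate * ((S != set0) && (S != setT))%:R.
Proof.
rewrite expect_step_phi lerD2l.
have r1_gt0 : 0 < 1 - r by rewrite subr_gt0.
have drop_eq : (r - 1) / Wfit r S * cut S = - ((1 - r) * ((Wfit r S)^-1 * cut S)).
  by rewrite mulrA -!mulNr opprB.
rewrite drop_eq lerN2; case: (boolP ((S != set0) && (S != setT))) => /= [/andP [S_ne0 S_neT]|_].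
  rewrite /drift_rate mulr1 -exprVn; apply: ler_wpM2l; first exact: ltW.
  have invn_gt0 : 0 < n^-1 by rewrite invr_gt0 n_gt0.
  rewrite exprS; apply: ler_pM; rewrite ?exprn_ge0 ?cut_lb ?(ltW invn_gt0) //.
  by rewrite lef_pV2 ?posrE ?n_gt0 ?Wfit_gt0 ?Wfit_le_n.
rewrite mulr0; apply: mulr_ge0 (ltW r1_gt0) (mulr_ge0 _ (cut_ge0 S)).
by rewrite invr_ge0 ltW ?Wfit_gt0.
Qed.

Lemma moran_step_ge0 (S S' : {set T}) : 0 <= moran_step e r S S'.
Proof.
apply: sumr_ge0 => x _; apply: sumr_ge0 => y _.
rewrite !mulr_ge0 ?ler0n ?invr_ge0 ?ler0n ?ltW ?Wfit_gt0 //.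
by rewrite /fitness; case: (x \in S); rewrite ?ler01 ?ltW.
Qed.

Lemma phi_ge0 (S : {set T}) : 0 <= phi S.
Proof. by apply: sumr_ge0 => x _; rewrite invr_ge0 ltW // degR_gt0. Qed.

Variable x0 : T.

Lemma moran_dist_ge0 (i : nat) (S : {set T}) : 0 <= moran_dist e r x0 i S.
Proof.
elim: i S => [|i IH] S /=; first by rewrite ler0n.
by apply: sumr_ge0 => S' _; rewrite mulr_ge0 ?moran_step_ge0.
Qed.

Definition Phi (i : nat) : R := \sum_S moran_dist e r x0 i S * phi S.

(* Chapman-Kolmogorov: Phi(i+1) averages the one-step expectation. *)
Lemma PhiS (i : nat) :
  Phi i.+1 = \sum_S moran_dist e r x0 i S * expect_step S phi.
Proof.
rewrite /Phi /=; under eq_bigr do rewrite mulr_suml.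
rewrite exchange_big; apply: eq_bigr => S _; rewrite /expect_step mulr_sumr.
by apply: eq_bigr => S' _; rewrite mulrA.
Qed.

Lemma Phi_step (i : nat) : Phi i.+1 <= Phi i - drift_rate * prob_tau_gt e r x0 i.
Proof.
rewrite PhiS; apply: le_trans (ler_sum _ (fun S _ =>
  ler_wpM2l (moran_dist_ge0 i S) (expect_step_phi_le S))) _.
rewrite /prob_tau_gt mulr_sumr [X in _ - X]big_mkcond -sumrB le_eqVlt.
by apply/orP; left; apply/eqP/eq_bigr => S _; case: (_ && _); rewrite /= ?mulr1 ?mulr0 ?mul0r; ring.
Qed.

Lemma Phi_ge0 (i : nat) : 0 <= Phi i.
Proof. by apply: sumr_ge0 => S _; rewrite mulr_ge0 ?moran_dist_ge0 ?phi_ge0. Qed.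

(* Initially phi({x0}) = 1/deg x0 <= 1. *)
Lemma Phi0_le1 : Phi 0%N <= 1.
Proof.
rewrite /Phi (bigD1 [set x0]) //= eqxx mul1r big1 ?addr0; last first.
  by move=> S /negbTE ->; rewrite mul0r.
by rewrite /phi big_set1 invf_le1 ?degR_gt0 // ler1n (@deg_gt0 _ _ e_conn hn).
Qed.

End Drift.

(* With c = (1 - r)/n^3: c * \sum_(i < N) P(tau > i) <= Phi(0) <= 1. *)
Theorem theorem5 (R : realFieldType) (T : finType) (e : rel T)
  (e_sym : symmetric e) (e_irr : irreflexive e)
  (e_conn : forall x y : T, connect e x y)
  (hn : (2 <= #|T|)%N) (r : R) (hr0 : 0 < r) (hr1 : r < 1) (x0 : T) :
  forall N : nat,
    \sum_(i < N) prob_tau_gt e r x0 i <= (1 - r)^-1 * (#|T|%:R) ^+ 3.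
Proof.
move=> N.
have drift_total : drift_rate R T r * \sum_(i < N) prob_tau_gt e r x0 i <= 1.
  apply: le_trans _ (Phi0_le1 R T e e_conn hn r x0).
  apply: potential_telescope => [i|i].
    exact: Phi_ge0 R T e e_conn hn r hr0 x0 i.
  exact: Phi_step R T e e_sym e_conn hn r hr0 hr1 x0 i.
have r1_gt0 : 0 < 1 - r by rewrite subr_gt0.
have n3_gt0 : 0 < (#|T|%:R : R) ^+ 3 by rewrite exprn_gt0 // (@n_gt0 R T hn).
move: drift_total; rewrite /drift_rate mulrAC ler_pdivrMr // mul1r.
by rewrite ler_pdivlMl.
Qed.
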